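(* For every preordered group $(G,P_G)$, the lattice of normal subobjects of $(G,P_G)$ in $\mathsf{PreOrdGrp}$ is modular: for normal subobjects $(A,P_A)$, $(B,P_B)$, $(C,P_C)$ of $(G,P_G)$ with $(C,P_C)\le(A,P_A)$, one has $(A,P_A)\wedge((B,P_B)\vee(C,P_C))=((A,P_A)\wedge(B,P_B))\vee(C,P_C)$.
   Context: A preordered group is a pair $(G,P_G)$ where $G$ is a group (additively written, not necessarily abelian) and $P_G\subseteq G$ is a submonoid closed under conjugation; morphisms $(G,P_G)\to(H,P_H)$ are group homomorphisms $f$ with $f(P_G)\subseteq P_H$. This is the category $\mathsf{PreOrdGrp}$. A normal subobject of $(G,P_G)$ is a subobject which is the kernel of some morphism; up to isomorphism these are exactly the pairs $(A,A\cap P_G)$ with $A$ a normal subgroup of $G$. Normal subobjects are ordered by inclusion; meet and join are taken in the poset of normal subobjects of $(G,P_G)$. *)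

Set Implicit Arguments.

Section Defs.
Variables (T : Type) (add : T -> T -> T) (opp : T -> T) (zero : T).

Definition is_group : Prop :=
  (forall x y z, add x (add y z) = add (add x y) z) /\
  (forall x, add zero x = x) /\ (forall x, add x zero = x) /\
  (forall x, add (opp x) x = zero) /\ (forall x, add x (opp x) = zero).

Definition conjg (g x : T) : T := add (add g x) (opp g).

(* P is a submonoid closed under conjugation: (G,P) is a preordered group *)
Definition preorder_cone (P : T -> Prop) : Prop :=
  P zero /\ (forall x y, P x -> P y -> P (add x y)) /\
  (forall g x, P x -> P (conjg g x)).

Definition normal_subgroup (A : T -> Prop) : Prop :=
  A zero /\ (forall x y, A x -> A y -> A (add x y)) /\
  (forall x, A x -> A (opp x)) /\
  (forall g x, A x -> A (conjg g x)).

Definition normal_subobject (P : T -> Prop) (X : (T -> Prop) * (T -> Prop)) : Prop :=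
  normal_subgroup (fst X) /\ (forall x, snd X x <-> (fst X x /\ P x)).

Definition sub_le (X Y : (T -> Prop) * (T -> Prop)) : Prop :=
  (forall x, fst X x -> fst Y x) /\ (forall x, snd X x -> snd Y x).

Definition sub_eq (X Y : (T -> Prop) * (T -> Prop)) : Prop :=
  sub_le X Y /\ sub_le Y X.

Definition is_meet (P : T -> Prop) (X Y M : (T -> Prop) * (T -> Prop)) : Prop :=
  normal_subobject P M /\ sub_le M X /\ sub_le M Y /\
  (forall Z, normal_subobject P Z -> sub_le Z X -> sub_le Z Y -> sub_le Z M).

Definition is_join (P : T -> Prop) (X Y J : (T -> Prop) * (T -> Prop)) : Prop :=
  normal_subobject P J /\ sub_le X J /\ sub_le Y J /\
  (forall Z, normal_subobject P Z -> sub_le X Z -> sub_le Y Z -> sub_le J Z).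

End Defs.

(** Normal subobjects of (G, P) are determined by their underlying normal
    subgroups, the positive part being forced to be A ∩ P; meets and joins are
    computed on the subgroups as A ∩ B and A + B.  The lattice of normal
    subobjects is thus the lattice of normal subgroups, which is modular by
    Dedekind's law: if C ≤ A and a = b + c with a ∈ A, c ∈ C, then
    b = a - c ∈ A ∩ B.  No property of the cone P is needed. *)

From Stdlib Require Import Setoid.

Set Implicit Arguments.

Section GroupIdentities.

Variables (T : Type) (add : T -> T -> T) (opp : T -> T) (zero : T).
Hypothesis hG : is_group add opp zero.

Let addA : forall x y z, add x (add y z) = add (add x y) z := proj1 hG.
Let addNr : forall x, add (opp x) x = zero := proj1 (proj2 (proj2 (proj2 hG))).
Let addrN : forall x, add x (opp x) = zero := proj2 (proj2 (proj2 (proj2 hG))).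

Lemma add0r x : add zero x = x.
Proof. apply hG. Qed.

Lemma addr0 x : add x zero = x.
Proof. apply hG. Qed.

Lemma add_eq0_opp x y : add x y = zero -> y = opp x.
Proof.
  intros Hxy. rewrite <- (add0r y), <- (addNr x), <- addA, Hxy, addr0.
  reflexivity.
Qed.

Lemma oppK x : opp (opp x) = x.
Proof. symmetry. apply add_eq0_opp, addNr. Qed.

Lemma opp_add x y : opp (add x y) = add (opp y) (opp x).
Proof.
  symmetry. apply add_eq0_opp.
  rewrite <- addA, (addA y), addrN, add0r, addrN. reflexivity.
Qed.

Lemma addrNK x y : add (add x y) (opp y) = x.
Proof. rewrite <- addA, addrN, addr0. reflexivity. Qed.

Lemma conjg_add g x y :
  conjg add opp g (add x y) = add (conjg add opp g x) (conjg add opp g y).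
Proof.
  unfold conjg. rewrite <- !addA, (addA (opp g)), addNr, add0r. reflexivity.
Qed.

Lemma add_add_conjg a b a' b' :
  add (add a b) (add a' b') = add (add a (conjg add opp b a')) (add b b').
Proof.
  unfold conjg. rewrite <- !addA, (addA (opp b)), addNr, add0r. reflexivity.
Qed.

Lemma opp_add_conjg a b :
  opp (add a b) = add (conjg add opp (opp b) (opp a)) (opp b).
Proof. unfold conjg. rewrite oppK, addrNK, opp_add. reflexivity. Qed.

End GroupIdentities.

Section NormalSubobjects.

Variables (T : Type) (add : T -> T -> T) (opp : T -> T) (zero : T).
Variable P : T -> Prop.

Definition setI (A B : T -> Prop) : T -> Prop := fun x => A x /\ B x.

Definition sum_set (A B : T -> Prop) : T -> Prop :=
  fun x => exists a b, A a /\ B b /\ x = add a b.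

Definition subobject_of (A : T -> Prop) : (T -> Prop) * (T -> Prop) :=
  (A, setI A P).

Notation normal_subgroup := (normal_subgroup add opp zero).
Notation normal_subobject := (normal_subobject add opp zero P).
Notation is_meet := (is_meet add opp zero P).
Notation is_join := (is_join add opp zero P).

Lemma normal_subobject_of A : normal_subgroup A -> normal_subobject (subobject_of A).
Proof. intros HA. split; [exact HA | reflexivity]. Qed.

Lemma sub_le_of_fst X Y :
  normal_subobject X -> normal_subobject Y ->
  (forall x, fst X x -> fst Y x) -> sub_le X Y.
Proof.
  intros [_ HX] [_ HY] HXY. split; [exact HXY |].
  intros x Hx. apply HX in Hx as [HXx HPx]. apply HY. auto.
Qed.

Lemma sub_eq_of_fst X Y :
  normal_subobject X -> normal_subobject Y ->
  (forall x, fst X x <-> fst Y x) -> sub_eq X Y.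
Proof.
  intros HX HY HXY. split; apply sub_le_of_fst; auto; apply HXY.
Qed.

Lemma normal_subgroupI A B :
  normal_subgroup A -> normal_subgroup B -> normal_subgroup (setI A B).
Proof. unfold setI. intros HA HB. firstorder. Qed.

Lemma normal_subgroup_sum A B :
  is_group add opp zero ->
  normal_subgroup A -> normal_subgroup B -> normal_subgroup (sum_set A B).
Proof.
  intros hG [A0 [AD [AN AJ]]] [B0 [BD [BN BJ]]].
  split; [| split; [| split]].
  - exists zero, zero. rewrite (add0r hG). repeat split; auto.
  - intros x y (a & b & Ha & Hb & ->) (a' & b' & Ha' & Hb' & ->).
    rewrite (add_add_conjg hG). do 2 eexists. split; [| split; [| reflexivity]]; auto.
  - intros x (a & b & Ha & Hb & ->).
    rewrite (opp_add_conjg hG). do 2 eexists. split; [| split; [| reflexivity]]; auto.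
  - intros g x (a & b & Ha & Hb & ->).
    rewrite (conjg_add hG). do 2 eexists. split; [| split; [| reflexivity]]; auto.
Qed.

Lemma is_meet_setI X Y :
  normal_subobject X -> normal_subobject Y ->
  is_meet X Y (subobject_of (setI (fst X) (fst Y))).
Proof.
  intros HX HY.
  assert (HM : normal_subobject (subobject_of (setI (fst X) (fst Y)))).
  { apply normal_subobject_of, normal_subgroupI; [apply HX | apply HY]. }
  split; [exact HM | split; [| split]].
  - apply sub_le_of_fst; auto. intros x []. auto.
  - apply sub_le_of_fst; auto. intros x []. auto.
  - intros Z HZ [HZX _] [HZY _]. apply sub_le_of_fst; auto. split; auto.
Qed.

Lemma is_join_sum X Y :
  is_group add opp zero ->
  normal_subobject X -> normal_subobject Y ->
  is_join X Y (subobject_of (sum_set (fst X) (fst Y))).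
Proof.
  intros hG HX HY.
  pose proof HX as [[X0 _] _]. pose proof HY as [[Y0 _] _].
  assert (HJ : normal_subobject (subobject_of (sum_set (fst X) (fst Y)))).
  { apply normal_subobject_of, normal_subgroup_sum; [exact hG | apply HX | apply HY]. }
  split; [exact HJ | split; [| split]].
  - apply sub_le_of_fst; auto. intros x Hx.
    exists x, zero. rewrite (addr0 hG). repeat split; auto.
  - apply sub_le_of_fst; auto. intros x Hx.
    exists zero, x. rewrite (add0r hG). repeat split; auto.
  - intros Z HZ [HXZ _] [HYZ _]. pose proof HZ as [[_ [ZD _]] _].
    apply sub_le_of_fst; auto. intros x (a & b & Ha & Hb & ->). auto.
Qed.

Lemma is_meet_unique X Y M M' : is_meet X Y M -> is_meet X Y M' -> sub_eq M M'.
Proof.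
  intros [HM [HMX [HMY LM]]] [HM' [HM'X [HM'Y LM']]]. split; auto.
Qed.

Lemma is_join_unique X Y J J' : is_join X Y J -> is_join X Y J' -> sub_eq J J'.
Proof.
  intros [HJ [HXJ [HYJ LJ]]] [HJ' [HXJ' [HYJ' LJ']]]. split; auto.
Qed.

Lemma is_meet_fstE X Y M :
  normal_subobject X -> normal_subobject Y -> is_meet X Y M ->
  forall x, fst M x <-> fst X x /\ fst Y x.
Proof.
  intros HX HY HM x.
  destruct (is_meet_unique HM (is_meet_setI HX HY)) as [[HMI _] [HIM _]].
  split; [apply HMI | apply HIM].
Qed.

Lemma is_join_fstE X Y J :
  is_group add opp zero ->
  normal_subobject X -> normal_subobject Y -> is_join X Y J ->
  forall x, fst J x <-> sum_set (fst X) (fst Y) x.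
Proof.
  intros hG HX HY HJ x.
  destruct (is_join_unique HJ (is_join_sum hG HX HY)) as [[HJS _] [HSJ _]].
  split; [apply HJS | apply HSJ].
Qed.

Lemma sum_set_modular A B C :
  is_group add opp zero -> normal_subgroup A -> (forall x, C x -> A x) ->
  forall x, A x /\ sum_set B C x <-> sum_set (setI A B) C x.
Proof.
  intros hG [_ [AD [AN _]]] HCA x. split.
  - intros [Hx (b & c & Hb & Hc & ->)].
    exists b, c. repeat split; auto.
    rewrite <- (addrNK hG b c). auto.
  - intros (b & c & [HAb Hb] & Hc & ->). split; [auto | exists b, c; auto].
Qed.

End NormalSubobjects.

Theorem proposition2p5
  (T : Type) (add : T -> T -> T) (opp : T -> T) (zero : T) (P : T -> Prop)
  (hG : is_group add opp zero) (hP : preorder_cone add opp zero P) :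
  (* normal subobjects form a lattice ... *)
  (forall X Y, normal_subobject add opp zero P X -> normal_subobject add opp zero P Y ->
     exists M, is_meet add opp zero P X Y M) /\
  (forall X Y, normal_subobject add opp zero P X -> normal_subobject add opp zero P Y ->
     exists J, is_join add opp zero P X Y J) /\
  (* ... which is modular *)
  (forall A B C J1 M1 M2 J2,
     normal_subobject add opp zero P A -> normal_subobject add opp zero P B ->
     normal_subobject add opp zero P C -> sub_le C A ->
     is_join add opp zero P B C J1 -> is_meet add opp zero P A J1 M1 ->
     is_meet add opp zero P A B M2 -> is_join add opp zero P M2 C J2 ->
     sub_eq M1 J2).
Proof.
  split; [intros X Y HX HY; eexists; apply is_meet_setI; eauto |].
  split; [intros X Y HX HY; eexists; apply is_join_sum; eauto |].
  intros A B C J1 M1 M2 J2 HA HB HC [HCA _] HJ1 HM1 HM2 HJ2.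
  apply (sub_eq_of_fst (proj1 HM1) (proj1 HJ2)). intros x.
  rewrite (is_meet_fstE HA (proj1 HJ1) HM1), (is_join_fstE hG (proj1 HM2) HC HJ2),
    (is_join_fstE hG HB HC HJ1).
  unfold sum_set. setoid_rewrite (is_meet_fstE HA HB HM2).
  apply (sum_set_modular (fst B) (fst C) hG (proj1 HA) HCA).
Qed.
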